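(* Let $n$ be a positive integer and $\Theta=\left[-\frac{1}{\sqrt n},+\frac{1}{\sqrt n}\right]^n$. Consider any (possibly randomized) learner that, for $t=1,\dots,T$, outputs $\hat c_t\in\Theta$ depending only on past observations $\{(X_i,x_i)\}_{i=1}^{t-1}$ (and its internal randomness). For any $T\ge n$ and $B>0$, there exist $c^*\in\Theta$ and non-empty compact sets $X_1,\dots,X_T\subseteq\mathbb{R}^n$ such that $$\max_{t=1,\dots,T}\max\{\langle c-c',x-x'\rangle: c,c'\in\Theta,\ x,x'\in X_t\}=B\quad\text{and}\quad\mathbb{E}\left[R^{c^*}_T\right]\ge\frac{Bn}{4},$$ where $R^{c^*}_T=\sum_{t=1}^T\langle c^*,x_t-\hat x_t\rangle$, $x_t\in\arg\max_{x\in X_t}\langle c^*,x\rangle$, $\hat x_t\in\arg\max_{x\in X_t}\langle\hat c_t,x\rangle$, and the expectation is over the learner's randomness. *)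

From HB Require Import structures.
From mathcomp Require Import all_boot all_order all_algebra.
From mathcomp Require Import all_classical all_reals all_analysis.
Set Implicit Arguments. Unset Strict Implicit. Unset Printing Implicit Defensive.
Import Order.TTheory GRing.Theory Num.Theory.
Import numFieldNormedType.Exports.
Local Open Scope classical_set_scope.
Local Open Scope ring_scope.

Definition dotp (R : realType) (n : nat) (u v : 'rV[R]_n) : R :=
  \sum_(i < n) u ord0 i * v ord0 i.

Definition Theta (R : realType) (n : nat) : set 'rV[R]_n :=
  [set c | forall i : 'I_n, - (Num.sqrt (n%:R))^-1 <= c ord0 i <= (Num.sqrt (n%:R))^-1].

Definition is_argmax (R : realType) (n : nat) (X : set 'rV[R]_n) (c x : 'rV[R]_n) : Prop :=
  X x /\ forall y, X y -> dotp c y <= dotp c x.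

Definition history (R : realType) (n : nat) (X : nat -> set 'rV[R]_n)
  (xs : nat -> 'rV[R]_n) (t : nat) : seq (set 'rV[R]_n * 'rV[R]_n) :=
  [seq (X i, xs i) | i <- iota 1 t.-1].

(* realized regret for learner randomness w *)
Definition regret (R : realType) (n : nat) (Omega : Type)
  (act : Omega -> nat -> seq (set 'rV[R]_n * 'rV[R]_n) -> set 'rV[R]_n -> 'rV[R]_n)
  (T : nat) (cstar : 'rV[R]_n) (X : nat -> set 'rV[R]_n) (xs : nat -> 'rV[R]_n)
  (w : Omega) : R :=
  \sum_(1 <= t < T.+1) dotp cstar (xs t - act w t (history X xs t) (X t)).
Arguments Theta {R} n _.

From HB Require Import structures.
From mathcomp Require Import all_boot all_order all_algebra.
From mathcomp Require Import all_classical all_reals all_analysis.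
From mathcomp Require Import ring lra zify.
From mathcomp Require Import measurable_realfun.
Set Implicit Arguments. Unset Strict Implicit. Unset Printing Implicit Defensive.
Import Order.TTheory GRing.Theory Num.Theory.
Import numFieldNormedType.Exports.
Local Open Scope classical_set_scope.
Local Open Scope ring_scope.

(* In round t <= n the adversary offers the two-point set X_t = {0, a e_t}, with
   s = 1/sqrt n and a = B/(2 s), so that the diameter condition holds with equality.
   The learner's only decision is whether to pick a e_t, and the sign of c*_t alone
   decides whether that pick is right.  The two expected regrets of round t, for
   c*_t = s and c*_t = -s, add up to s a = B/2; since the learner's behaviour in
   round t depends only on the signs of c*_1, ..., c*_(t-1), the adversary can fix
   the sign of c*_t afterwards so as to pick the larger one, which is >= B/4.
   Summing over the first n rounds gives B n/4. *)

Section CausalFixpoint.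
Variable choose : nat -> (nat -> bool) -> bool.
Hypothesis choose_causal :
  forall i f g, (forall j, (j < i)%N -> f j = g j) -> choose i f = choose i g.

Fixpoint causal_prefix (k : nat) : seq bool :=
  if k is k'.+1 then
    rcons (causal_prefix k') (choose k' (nth false (causal_prefix k')))
  else [::].

Definition causal_fix (i : nat) : bool := nth false (causal_prefix i.+1) i.

Lemma size_causal_prefix k : size (causal_prefix k) = k.
Proof. by elim: k => //= k IH; rewrite size_rcons IH. Qed.

Lemma nth_causal_prefix k i : (i < k)%N -> nth false (causal_prefix k) i = causal_fix i.
Proof.
elim: k => // k IH; rewrite ltnS leq_eqVlt => /orP [/eqP -> //|lt_ik].
by rewrite /= nth_rcons size_causal_prefix lt_ik IH.
Qed.

Lemma causal_fixE i : causal_fix i = choose i causal_fix.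
Proof.
rewrite {1}/causal_fix /= nth_rcons size_causal_prefix ltnn eqxx.
by apply: choose_causal => j; apply: nth_causal_prefix.
Qed.

End CausalFixpoint.

Lemma half_lee_of_sum (R : realFieldType) (x y : \bar R) (c : R) :
  (x + y = c%:E -> y <= x -> (c / 2)%:E <= x)%E.
Proof.
case: x => [x| |]; case: y => [y| |] //=.
- by move=> [<-]; rewrite !lee_fin => ?; lra.
all: by move=> *; rewrite ?leey.
Qed.

Section DotProduct.
Variables (R : realType) (n : nat).
Implicit Types (u v w : 'rV[R]_n).

Lemma dotpBr u v w : dotp u (v - w) = dotp u v - dotp u w.
Proof. by rewrite /dotp -sumrB; apply: eq_bigr => i _; rewrite !mxE mulrBr. Qed.

Lemma dotpBl u v w : dotp (u - v) w = dotp u w - dotp v w.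
Proof. by rewrite /dotp -sumrB; apply: eq_bigr => i _; rewrite !mxE mulrBl. Qed.

Lemma dotpNr u v : dotp u (- v) = - dotp u v.
Proof. by rewrite /dotp -sumrN; apply: eq_bigr => i _; rewrite !mxE mulrN. Qed.

Lemma dotp0 u : dotp u 0 = 0.
Proof. by rewrite /dotp big1 // => i _; rewrite mxE mulr0. Qed.

Definition basis_row (a : R) (j : nat) : 'rV[R]_n :=
  \row_(k < n) (if (k : nat) == j then a else 0).

Lemma basis_row_out a j : (n <= j)%N -> basis_row a j = 0.
Proof.
move=> le_nj; apply/rowP => k; rewrite !mxE.
by case: eqP => // eq_kj; move: (ltn_ord k); rewrite eq_kj ltnNge le_nj.
Qed.

Lemma dotp_basis_row u a j (lt_jn : (j < n)%N) :
  dotp u (basis_row a j) = u ord0 (Ordinal lt_jn) * a.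
Proof.
rewrite /dotp (bigD1 (Ordinal lt_jn)) //= big1 ?addr0; first by rewrite mxE eqxx.
move=> i /eqP ne_i; rewrite mxE; case: eqP => [eq_ij|]; last by rewrite mulr0.
by case: ne_i; apply: val_inj.
Qed.

End DotProduct.

Arguments basis_row {R} n a j.

Section HardInstance.
Variables (R : realType) (n : nat) (a s : R).

(* Since basis_row n a j = 0 for j >= n, the probe collapses to {0} after round n. *)
Definition probe (t : nat) : set 'rV[R]_n := [set x | x = 0 \/ x = basis_row n a t.-1].

Lemma probe_compact t : compact (probe t).
Proof.
have -> : probe t = [set 0] `|` [set basis_row n a t.-1] by [].
by apply: compactU; exact: compact_set1.
Qed.

Lemma probe_nonempty t : probe t !=set0.
Proof. by exists 0; left. Qed.

Definition sign_row (f : nat -> bool) : 'rV[R]_n :=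
  \row_(j < n) (if f j then s else - s).

Definition probe_best (f : nat -> bool) (t : nat) : 'rV[R]_n :=
  if f t.-1 then basis_row n a t.-1 else 0.

Lemma probe_best_in f t : probe t (probe_best f t).
Proof. by rewrite /probe_best; case: ifP; [right | left]. Qed.

Lemma argmax_probe f t x : 0 < a -> 0 < s ->
  is_argmax (probe t) (sign_row f) x -> x = probe_best f t.
Proof.
move=> a_gt0 s_gt0 [probe_x max_x]; rewrite /probe_best.
have [lt_tn|le_nt] := ltnP t.-1 n; last first.
  by rewrite basis_row_out // if_same; case: probe_x => ->; rewrite ?basis_row_out.
have dotp_e : dotp (sign_row f) (basis_row n a t.-1) = (if f t.-1 then s else - s) * a.
  by rewrite (dotp_basis_row _ _ lt_tn) mxE.
have sa_gt0 : 0 < s * a by rewrite mulr_gt0.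
case: probe_x max_x => -> max_x; case: ifP => f_t //; exfalso.
- by have := max_x (basis_row n a t.-1) (or_intror erefl); rewrite dotp0 dotp_e f_t; lra.
- by have := max_x 0 (or_introl erefl); rewrite dotp0 dotp_e f_t mulNr; lra.
Qed.

Lemma probe_width t (c c' x x' : 'rV[R]_n) : 0 < a -> 0 <= s ->
  (forall i, - s <= c ord0 i <= s) -> (forall i, - s <= c' ord0 i <= s) ->
  probe t x -> probe t x' -> dotp (c - c') (x - x') <= 2 * s * a.
Proof.
move=> a_gt0 s_ge0 c_bd c'_bd x_probe x'_probe.
have [lt_tn|le_nt] := ltnP t.-1 n; last first.
  move: x_probe x'_probe; rewrite /probe /= basis_row_out //.
  by move=> [] -> [] ->; rewrite subr0 dotp0; nra.
move: (c_bd (Ordinal lt_tn)) (c'_bd (Ordinal lt_tn)).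
case: x_probe x'_probe => -> [] ->;
  rewrite ?subr0 ?sub0r ?subrr ?dotp0 ?dotpBl ?dotpNr ?dotp_basis_row ?mxE;
  move: (c ord0 _) (c' ord0 _) => cj cj' /andP[? ?] /andP[? ?]; nra.
Qed.

Lemma dotp_probe u t x (lt_tn : (t.-1 < n)%N) : a != 0 -> probe t x ->
  dotp u x = u ord0 (Ordinal lt_tn) / a * dotp (basis_row n a t.-1) x.
Proof.
move=> a_neq0 [] ->; first by rewrite !dotp0 mulr0.
by rewrite !(dotp_basis_row _ _ lt_tn) mxE eqxx mulrA divfK.
Qed.

(* Regret of a round whose coordinate of c* is s (b = true) or -s (b = false), in
   terms of g = <a e_(t-1), x> for the learner's pick x, which is 0 or a^2. *)
Definition round_regret (b : bool) (g : R) : R := s / a * (if b then a ^+ 2 - g else g).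

Lemma dotp_sign_row_probe f t x : a != 0 -> probe t x ->
  dotp (sign_row f) (probe_best f t - x) =
  if (t.-1 < n)%N then round_regret (f t.-1) (dotp (basis_row n a t.-1) x) else 0.
Proof.
move=> a_neq0 x_probe; case: ltnP => [lt_tn|le_nt]; last first.
  by case: x_probe; rewrite /probe_best !basis_row_out // if_same => ->; rewrite subr0 dotp0.
have best_probe := probe_best_in f t.
rewrite dotpBr (dotp_probe _ lt_tn a_neq0 x_probe) (dotp_probe _ lt_tn a_neq0 best_probe).
rewrite /round_regret /probe_best mxE; case: (f t.-1).
- by rewrite (dotp_basis_row _ _ lt_tn) mxE eqxx -expr2 -mulrBr.
- by rewrite dotp0 mulr0 sub0r !mulNr opprK.
Qed.

Lemma probe_width_attained : (0 < n)%N ->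
  dotp (sign_row (fun=> true) - sign_row (fun=> false)) (basis_row n a 0 - 0) = 2 * s * a.
Proof. by move=> n_gt0; rewrite subr0 (dotp_basis_row _ _ n_gt0) !mxE; ring. Qed.

End HardInstance.

Arguments probe {R} n a t.
Arguments sign_row {R} n s f.
Arguments probe_best {R} n a f t.

Lemma Theta_sign_row (R : realType) (n : nat) (f : nat -> bool) :
  Theta n (sign_row n (Num.sqrt (n%:R : R))^-1 f).
Proof.
move=> i; rewrite mxE; have : 0 <= (Num.sqrt (n%:R : R))^-1 by rewrite invr_ge0 sqrtr_ge0.
by case: (f i) => ?; apply/andP; split; lra.
Qed.

Section Adversary.
Variables (R : realType) (n : nat) (a s : R).
Variables (d : measure_display) (Omega : measurableType d) (P : probability Omega R).
Variable act : Omega -> nat -> seq (set 'rV[R]_n * 'rV[R]_n) -> set 'rV[R]_n -> 'rV[R]_n.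
Hypothesis act_probe : forall w t h, probe n a t (act w t h (probe n a t)).
Hypothesis act_measurable :
  forall t h c, measurable_fun setT (fun w => dotp c (act w t h (probe n a t))).

Definition probe_history (f : nat -> bool) (t : nat) : seq (set 'rV[R]_n * 'rV[R]_n) :=
  [seq (probe n a i, probe_best n a f i) | i <- iota 1 t.-1].

Definition probe_hit (f : nat -> bool) (t : nat) (w : Omega) : R :=
  dotp (basis_row n a t.-1) (act w t (probe_history f t) (probe n a t)).

Lemma regret_probe f T (xs : nat -> 'rV[R]_n) w : 0 < a -> 0 < s -> (n <= T)%N ->
  (forall t, (1 <= t <= T)%N -> is_argmax (probe n a t) (sign_row n s f) (xs t)) ->
  regret act T (sign_row n s f) (probe n a) xs w =
  \sum_(t < n) round_regret a s (f t) (probe_hit f t.+1 w).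
Proof.
move=> a_gt0 s_gt0 le_nT xs_max.
have xsE t : (1 <= t <= T)%N -> xs t = probe_best n a f t.
  by move=> t_in; exact: argmax_probe a_gt0 s_gt0 (xs_max t t_in).
have termE t : (1 <= t <= T)%N ->
    dotp (sign_row n s f) (xs t - act w t (history (probe n a) xs t) (probe n a t)) =
    if (t.-1 < n)%N then round_regret a s (f t.-1) (probe_hit f t w) else 0.
  move=> t_in; have -> : history (probe n a) xs t = probe_history f t.
    apply/eq_in_map => i; rewrite mem_iota => /andP[i_ge1 i_lt].
    by rewrite xsE //; lia.
  by rewrite xsE // dotp_sign_row_probe ?gt_eqF.
rewrite /regret (big_cat_nat _ (n := n.+1)) //=.
rewrite [X in _ + X]big1_seq ?addr0 => [|t /andP[_]]; last first.
  by rewrite mem_index_iota => t_in; rewrite termE ?ifN //; lia.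
rewrite big_add1 /= big_mkord; apply: eq_bigr => t _.
by rewrite termE /= ?ltn_ord // (leq_trans (ltn_ord t)).
Qed.

Definition expected_round_regret (b : bool) (f : nat -> bool) (t : nat) : \bar R :=
  \int[P]_w (round_regret a s b (probe_hit f t w))%:E.

(* The sign of coordinate i makes round i+1 the costlier one in expectation. *)
Definition adversary : nat -> bool := causal_fix (fun i f =>
  (expected_round_regret false f i.+1 <= expected_round_regret true f i.+1)%E).

Lemma probe_history_causal f g t :
  (forall i, (i < t.-1)%N -> f i = g i) -> probe_history f t = probe_history g t.
Proof.
move=> eq_fg; apply/eq_in_map => i; rewrite mem_iota => /andP[i_ge1 i_lt].
by rewrite /probe_best eq_fg //; lia.
Qed.

Lemma adversaryE i : adversary i =
  (expected_round_regret false adversary i.+1 <= expected_round_regret true adversary i.+1)%E.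
Proof.
apply: causal_fixE => {}i f g eq_fg.
by rewrite /expected_round_regret /probe_hit (probe_history_causal (t := i.+1) eq_fg).
Qed.

Lemma probe_hit_values f t w : probe_hit f t w = 0 \/ probe_hit f t w = a ^+ 2.
Proof.
rewrite /probe_hit; case: (act_probe w t (probe_history f t)) => ->; first by left; rewrite dotp0.
have [lt_tn|le_nt] := ltnP t.-1 n; last by left; rewrite basis_row_out // dotp0.
by right; rewrite (dotp_basis_row _ _ lt_tn) mxE eqxx expr2.
Qed.

Lemma round_regret_hit_ge0 b f t w : 0 < a -> 0 <= s ->
  0 <= round_regret a s b (probe_hit f t w).
Proof.
move=> a_gt0 s_ge0; rewrite /round_regret mulr_ge0 ?divr_ge0 ?(ltW a_gt0) //.
by case: (probe_hit_values f t w) => ->; case: b; rewrite ?subr0 ?subrr ?sqr_ge0.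
Qed.

Lemma measurable_round_regret_hit b f t :
  measurable_fun setT (fun w => (round_regret a s b (probe_hit f t w))%:E).
Proof.
apply/measurable_EFinP; apply: measurable_funM; first exact: measurable_cst.
case: b; last exact: act_measurable.
by apply: measurable_funB; [exact: measurable_cst | exact: act_measurable].
Qed.

Lemma expected_round_regret_sum f t : 0 < a -> 0 <= s ->
  (expected_round_regret true f t + expected_round_regret false f t = (s * a)%:E)%E.
Proof.
move=> a_gt0 s_ge0; rewrite /expected_round_regret -ge0_integralD //; last 4 first.
- by move=> w _; rewrite lee_fin round_regret_hit_ge0.
- exact: measurable_round_regret_hit.
- by move=> w _; rewrite lee_fin round_regret_hit_ge0.
- exact: measurable_round_regret_hit.
under eq_integral => w _ do rewrite -EFinD /round_regret -mulrDr subrK.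
rewrite integral_cst // expr2 mulrA divfK ?gt_eqF // -[RHS]mule1.
by congr (_ * _)%E; exact: probability_setT.
Qed.

Lemma adversary_round_regret_ge t : 0 < a -> 0 <= s ->
  ((s * a / 2)%:E <= expected_round_regret (adversary t) adversary t.+1)%E.
Proof.
move=> a_gt0 s_ge0; have sum_eq := expected_round_regret_sum adversary t.+1 a_gt0 s_ge0.
have := adversaryE t; case: (adversary t) => /esym choice.
- exact: half_lee_of_sum choice.
- apply: (half_lee_of_sum (y := expected_round_regret true adversary t.+1)).
    by rewrite addeC sum_eq.
  by move/negbT: choice; rewrite -ltNge => /ltW.
Qed.

Lemma adversary_expected_regret_ge T xs : 0 < a -> 0 < s -> (n <= T)%N ->
  (forall t, (1 <= t <= T)%N -> is_argmax (probe n a t) (sign_row n s adversary) (xs t)) ->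
  ((n%:R * (s * a / 2))%:E <=
   \int[P]_w (regret act T (sign_row n s adversary) (probe n a) xs w)%:E)%E.
Proof.
move=> a_gt0 s_gt0 le_nT xs_max.
under eq_integral => w _ do rewrite (regret_probe w a_gt0 s_gt0 le_nT xs_max) -sumEFin.
rewrite ge0_integral_sum //; last 2 first.
- by move=> t; exact: measurable_round_regret_hit.
- by move=> t w _; rewrite lee_fin round_regret_hit_ge0 // ltW.
apply: (@le_trans _ _ (\sum_(t < n) (s * a / 2)%:E)%E).
  by rewrite sumEFin sumr_const card_ord mulr_natl.
by apply: lee_sum => t _; apply: adversary_round_regret_ge; rewrite // ltW.
Qed.

End Adversary.

Theorem theorem3 (R : realType) (n : nat) (hn : (0 < n)%N)
  (d : measure_display) (Omega : measurableType d) (P : probability Omega R)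
  (L : Omega -> nat -> seq (set 'rV[R]_n * 'rV[R]_n) -> 'rV[R]_n)
  (act : Omega -> nat -> seq (set 'rV[R]_n * 'rV[R]_n) -> set 'rV[R]_n -> 'rV[R]_n)
  (hL : forall w t h, Theta n (L w t h))
  (hact : forall w t h (Y : set 'rV[R]_n), compact Y -> Y !=set0 ->
            is_argmax Y (L w t h) (act w t h Y))
  (hmeas : forall t h (Y : set 'rV[R]_n) (c : 'rV[R]_n),
            measurable_fun setT (fun w => dotp c (act w t h Y)))
  (T : nat) (hT : (n <= T)%N) (B : R) (hB : 0 < B) :
  exists cstar : 'rV[R]_n, Theta n cstar /\
  exists X : nat -> set 'rV[R]_n,
    (forall t, (1 <= t <= T)%N -> compact (X t) /\ X t !=set0) /\
    ((forall t, (1 <= t <= T)%N -> forall c c' x x',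
        Theta n c -> Theta n c' -> X t x -> X t x' -> dotp (c - c') (x - x') <= B) /\
     (exists t, (1 <= t <= T)%N /\ exists c c' x x',
        Theta n c /\ Theta n c' /\ X t x /\ X t x' /\ dotp (c - c') (x - x') = B)) /\
    forall xs : nat -> 'rV[R]_n,
      (forall t, (1 <= t <= T)%N -> is_argmax (X t) cstar (xs t)) ->
      ((B * n%:R / 4)%:E <= \int[P]_w (regret act T cstar X xs w)%:E)%E.
Proof.
set s : R := (Num.sqrt n%:R)^-1.
have s_gt0 : 0 < s by rewrite invr_gt0 sqrtr_gt0 ltr0n.
set a : R := B / (2 * s).
have a_gt0 : 0 < a by rewrite divr_gt0 // mulr_gt0.
have width_B : 2 * s * a = B by rewrite mulrC divfK // gt_eqF // mulr_gt0.
have act_probe w t h : probe n a t (act w t h (probe n a t)).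
  by case: (hact w t h _ (@probe_compact _ n a t) (probe_nonempty n a t)).
exists (sign_row n s (adversary a s P act)); split; first exact: Theta_sign_row.
exists (probe n a); split.
  by move=> t _; split; [exact: probe_compact | exact: probe_nonempty].
split; first split.
- move=> t _ c c' x x' c_Theta c'_Theta x_probe x'_probe; rewrite -width_B.
  exact: probe_width a_gt0 (ltW s_gt0) c_Theta c'_Theta x_probe x'_probe.
- exists 1%N; split; first exact: leq_trans hn hT.
  exists (sign_row n s (fun=> true)), (sign_row n s (fun=> false)), (basis_row n a 0), 0.
  do 2 (split; first exact: Theta_sign_row).
  by split; [right | split; [left | rewrite probe_width_attained]].
- move=> xs xs_max; have -> : B * n%:R / 4 = n%:R * (s * a / 2) by rewrite -width_B; field.
  exact: adversary_expected_regret_ge act_probe (fun t h => hmeas t h _) _ _ a_gt0 s_gt0 hT xs_max.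
Qed.
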